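(* (i) If $1\le q<p<\infty$, then the pair $(\ell_p,\ell_q)$ has the sBPBp. (ii) If $1<p\le q<\infty$, then the pair $(\ell_p,\ell_q)$ fails the sBPBp.
   Context: Scalars $\mathbb{K}=\mathbb{R}$ or $\mathbb{C}$; $\ell_p$ is the usual sequence space. $S_X$ is the unit sphere of $X$, $\mathcal{L}(X,Y)$ the bounded linear operators. A pair $(X,Y)$ has the strong Bishop–Phelps–Bollobás property (sBPBp) if for every $\varepsilon>0$ and every $T\in\mathcal{L}(X,Y)$ with $\|T\|=1$ there exists $\eta=\eta(\varepsilon,T)>0$ such that whenever $x_0\in S_X$ satisfies $\|T(x_0)\|>1-\eta$, there exists $x_1\in S_X$ with $\|T(x_1)\|=1$ and $\|x_1-x_0\|<\varepsilon$. *)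

From Stdlib Require Import Reals Lra Classical ClassicalEpsilon.
Open Scope R_scope.

Record ScalarField := {
  scal : Type;
  sadd : scal -> scal -> scal;
  smul : scal -> scal -> scal;
  sopp : scal -> scal;
  sabs : scal -> R }.

Definition RScalars : ScalarField :=
  {| scal := R; sadd := Rplus; smul := Rmult; sopp := Ropp; sabs := Rabs |}.

Definition Cadd (z w : R * R) : R * R := (fst z + fst w, snd z + snd w).
Definition Cmul (z w : R * R) : R * R :=
  (fst z * fst w - snd z * snd w, fst z * snd w + snd z * fst w).
Definition Copp (z : R * R) : R * R := (- fst z, - snd z).
Definition Cmod (z : R * R) : R := sqrt (fst z * fst z + snd z * snd z).

Definition CScalars : ScalarField :=
  {| scal := R * R; sadd := Cadd; smul := Cmul; sopp := Copp; sabs := Cmod |}.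

Inductive scalar_choice := RealScalars | ComplexScalars.

Definition Kof (c : scalar_choice) : ScalarField :=
  match c with RealScalars => RScalars | ComplexScalars => CScalars end.

(* real power t^p for t >= 0, with 0^p = 0 (p > 0) *)
Definition rpow (t p : R) : R :=
  if Rlt_dec 0 t then Rpower t p else 0.

Section Seq.
Variable K : ScalarField.
Definition seqK := nat -> scal K.

Definition vadd (x y : seqK) : seqK := fun n => sadd K (x n) (y n).
Definition vscale (a : scal K) (x : seqK) : seqK := fun n => smul K a (x n).
Definition vsub (x y : seqK) : seqK := fun n => sadd K (x n) (sopp K (y n)).

Definition in_lp (p : R) (x : seqK) : Prop :=
  exists s, infinite_sum (fun n => rpow (sabs K (x n)) p) s.

Definition lp_sum (p : R) (x : seqK) : R :=
  match excluded_middle_informative (in_lp p x) with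
  | left H => proj1_sig (constructive_indefinite_description _ H)
  | right _ => 0
  end.

Definition lp_norm (p : R) (x : seqK) : R := rpow (lp_sum p x) (1 / p).

Definition bounded_linear (p q : R) (T : seqK -> seqK) : Prop :=
  (forall x, in_lp p x -> in_lp q (T x)) /\
  (forall x y, in_lp p x -> in_lp p y -> T (vadd x y) = vadd (T x) (T y)) /\
  (forall a x, in_lp p x -> T (vscale a x) = vscale a (T x)) /\
  (exists M, forall x, in_lp p x -> lp_norm q (T x) <= M * lp_norm p x).

Definition op_norm_is (p q : R) (T : seqK -> seqK) (r : R) : Prop :=
  is_lub (fun t => exists x, in_lp p x /\ lp_norm p x = 1 /\ t = lp_norm q (T x)) r.

Definition sBPBp (p q : R) : Prop :=
  forall eps, 0 < eps ->
  forall T, bounded_linear p q T -> op_norm_is p q T 1 ->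
  exists eta, 0 < eta /\
    forall x0, in_lp p x0 -> lp_norm p x0 = 1 -> lp_norm q (T x0) > 1 - eta ->
    exists x1, in_lp p x1 /\ lp_norm p x1 = 1 /\ lp_norm q (T x1) = 1 /\
               lp_norm p (vsub x1 x0) < eps.
End Seq.

(* Take points x_n of the unit sphere of l_p with ||T x_n||_q -> 1 that admit no
   norm-attaining point nearby, pass to a coordinatewise limit x and write x_n = x + y_n.
   Along such splittings with y_n coordinatewise null, both ||.||_p^p and ||T .||_q^q are
   asymptotically additive. Moreover ||T y_n||_q -> 0: otherwise summing many far-apart y_n
   gives vectors z with ||T z||_q^q growing linearly in the number of summands while
   ||z||_p^p also grows only linearly, against ||T z||_q <= ||z||_p and q < p. Hence
   ||T x||_q = 1, which forces ||x||_p = 1 and ||y_n||_p -> 0: x attains the norm close to x_n. For p <= q the diagonal operator with coefficients 1 - 1/(k+2) has norm 1 from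
   l_p to l_q but attains its norm nowhere. *)

From Stdlib Require Import Reals Lra Lia Classical ClassicalEpsilon FunctionalExtensionality.
Open Scope R_scope.

(** * Real powers *)

Lemma Rabs_le_between a b : Rabs a <= b -> - b <= a <= b.
Proof. intros H. pose proof (Rle_abs a). pose proof (Rle_abs (- a)). rewrite Rabs_Ropp in *. lra. Qed.

Lemma rpow_Rpower t s : 0 < t -> rpow t s = Rpower t s.
Proof. intros Ht; unfold rpow; destruct (Rlt_dec 0 t); [reflexivity | lra]. Qed.

Lemma rpow_nonpos t s : t <= 0 -> rpow t s = 0.
Proof. intros Ht; unfold rpow; destruct (Rlt_dec 0 t); [lra | reflexivity]. Qed.

Lemma rpow_0_l s : rpow 0 s = 0.
Proof. apply rpow_nonpos; lra. Qed.

Lemma rpow_nonneg t s : 0 <= rpow t s.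
Proof. unfold rpow; destruct (Rlt_dec 0 t); [left; apply exp_pos | lra]. Qed.

Lemma rpow_gt0 t s : 0 < t -> 0 < rpow t s.
Proof. intros Ht; rewrite rpow_Rpower by exact Ht; apply exp_pos. Qed.

Lemma rpow_le t u s : 0 < s -> t <= u -> rpow t s <= rpow u s.
Proof.
  intros Hs Htu. destruct (Rle_lt_dec t 0) as [Ht | Ht].
  - rewrite rpow_nonpos by exact Ht. apply rpow_nonneg.
  - rewrite !rpow_Rpower by lra. apply Rle_Rpower_l; lra.
Qed.

Lemma rpow_lt t u s : 0 < s -> 0 <= t < u -> rpow t s < rpow u s.
Proof.
  intros Hs [[Ht | <-] Htu].
  - rewrite !rpow_Rpower by lra. apply Rlt_Rpower_l; lra.
  - rewrite rpow_0_l. apply rpow_gt0; lra.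
Qed.

Lemma rpow_le_rev t u s : 0 < s -> 0 <= u -> rpow t s <= rpow u s -> t <= u.
Proof.
  intros Hs Hu H. destruct (Rle_lt_dec t u) as [|Hut]; [assumption|].
  assert (rpow u s < rpow t s) by (apply rpow_lt; lra). lra.
Qed.

Lemma rpow_mult_distr t u s : 0 <= t -> 0 <= u -> rpow (t * u) s = rpow t s * rpow u s.
Proof.
  intros [Ht | <-] [Hu | <-]; rewrite ?Rmult_0_l, ?Rmult_0_r, ?rpow_0_l; try ring.
  rewrite !rpow_Rpower by (try apply Rmult_lt_0_compat; assumption).
  symmetry; apply Rpower_mult_distr; assumption.
Qed.

Lemma rpow_mult t a b : 0 <= t -> rpow (rpow t a) b = rpow t (a * b).
Proof.
  intros [Ht | <-]; [|rewrite !rpow_0_l; reflexivity].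
  rewrite (rpow_Rpower t a), rpow_Rpower, rpow_Rpower by (try apply exp_pos; exact Ht).
  apply Rpower_mult.
Qed.

Lemma rpow_plus t a b : 0 <= t -> rpow t (a + b) = rpow t a * rpow t b.
Proof.
  intros [Ht | <-]; [|rewrite !rpow_0_l; ring].
  rewrite !rpow_Rpower by exact Ht. apply Rpower_plus.
Qed.

Lemma rpow_1 t : 0 <= t -> rpow t 1 = t.
Proof. intros [Ht | <-]; [rewrite rpow_Rpower by exact Ht; apply Rpower_1, Ht | apply rpow_0_l]. Qed.

Lemma rpow_1_l s : rpow 1 s = 1.
Proof. rewrite rpow_Rpower by lra. unfold Rpower. rewrite ln_1, Rmult_0_r. apply exp_0. Qed.

Lemma rpow_inv t s : 0 <= t -> 0 < s -> rpow (rpow t s) (/ s) = t.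
Proof. intros Ht Hs. rewrite rpow_mult, Rinv_r by lra. apply rpow_1, Ht. Qed.

Lemma rpow_eq_1 t s : 0 <= t -> 0 < s -> rpow t s = 1 -> t = 1.
Proof. intros Ht Hs E. rewrite <- (rpow_inv t s Ht Hs), E. apply rpow_1_l. Qed.

Lemma rpow_lt_1 t s : 0 < s -> 0 <= t < 1 -> rpow t s < 1.
Proof. intros. rewrite <- (rpow_1_l s). apply rpow_lt; lra. Qed.

Lemma rpow_gt_1 t s : 0 < s -> 1 < t -> 1 < rpow t s.
Proof. intros. rewrite <- (rpow_1_l s). apply rpow_lt; lra. Qed.

(* [a + b <= (1 + th) b] when [a <= th b], and [a + b <= (1 + /th) a] otherwise. *)
Lemma rpow_plus_le_split s a b th : 0 < s -> 0 <= a -> 0 <= b -> 0 < th ->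
  rpow (a + b) s <= rpow (1 + th) s * rpow b s + rpow (1 + / th) s * rpow a s.
Proof.
  intros Hs Ha Hb Hth. assert (Hith : 0 < / th) by (apply Rinv_0_lt_compat, Hth).
  rewrite <- !rpow_mult_distr by lra.
  pose proof (rpow_nonneg ((1 + th) * b) s). pose proof (rpow_nonneg ((1 + / th) * a) s).
  destruct (Rle_lt_dec a (th * b)).
  - enough (rpow (a + b) s <= rpow ((1 + th) * b) s) by lra. apply rpow_le; lra.
  - enough (rpow (a + b) s <= rpow ((1 + / th) * a) s) by lra. apply rpow_le; [lra|].
    enough (b <= / th * a) by lra.
    apply Rmult_le_reg_l with th; [lra|]. rewrite <- Rmult_assoc, Rinv_r; lra.
Qed.

Lemma rpow_plus_le_eps s g : 0 < s -> 0 < g -> exists D, 0 <= D /\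
  forall a b, 0 <= a -> 0 <= b -> rpow (a + b) s <= (1 + g) * rpow b s + D * rpow a s.
Proof.
  intros Hs Hg. set (th := rpow (1 + g) (/ s) - 1).
  assert (Hth : 0 < th).
  { enough (1 < rpow (1 + g) (/ s)) by (unfold th; lra).
    apply rpow_gt_1; [apply Rinv_0_lt_compat|]; lra. }
  assert (E : rpow (1 + th) s = 1 + g).
  { unfold th. replace (1 + (rpow (1 + g) (/ s) - 1)) with (rpow (1 + g) (/ s)) by ring.
    rewrite rpow_mult, Rinv_l by lra. apply rpow_1; lra. }
  exists (rpow (1 + / th) s). split; [apply rpow_nonneg|].
  intros a b Ha Hb. rewrite <- E. apply rpow_plus_le_split; assumption.
Qed.

Lemma rpow_dist_le s g : 0 < s -> 0 < g -> exists D, 0 <= D /\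
  forall u v w, 0 <= v -> 0 <= w -> Rabs (w - v) <= u ->
  Rabs (rpow w s - rpow v s) <= g * (rpow w s + rpow v s) + D * rpow u s.
Proof.
  intros Hs Hg. destruct (rpow_plus_le_eps s g Hs Hg) as [D [HD Hle]].
  exists D. split; [exact HD|]. intros u v w Hv Hw Hu.
  assert (Hu0 : 0 <= u) by (eapply Rle_trans; [apply Rabs_pos | exact Hu]).
  apply Rabs_le_between in Hu.
  assert (rpow w s <= (1 + g) * rpow v s + D * rpow u s).
  { eapply Rle_trans; [apply rpow_le with (u := u + v); lra | apply Hle; lra]. }
  assert (rpow v s <= (1 + g) * rpow w s + D * rpow u s).
  { eapply Rle_trans; [apply rpow_le with (u := u + w); lra | apply Hle; lra]. }
  pose proof (rpow_nonneg v s). pose proof (rpow_nonneg w s).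
  apply Rabs_le. split; nra.
Qed.

Lemma rpow_add_defect_le s g : 0 < s -> 0 < g -> exists D, 0 <= D /\
  forall u v w, 0 <= u -> 0 <= v -> 0 <= w -> Rabs (w - v) <= u ->
  Rabs (rpow w s - rpow u s - rpow v s) <= g * (rpow w s + rpow v s) + D * rpow u s.
Proof.
  intros Hs Hg. destruct (rpow_dist_le s g Hs Hg) as [D [HD Hdist]].
  exists (D + 1). split; [lra|]. intros u v w Hu Hv Hw Huvw.
  pose proof (Hdist u v w Hv Hw Huvw). pose proof (rpow_nonneg u s).
  pose proof (Rabs_triang (rpow w s - rpow v s) (- rpow u s)).
  rewrite Rabs_Ropp, (Rabs_right (rpow u s)) in * by lra.
  replace (rpow w s - rpow u s - rpow v s) with (rpow w s - rpow v s + - rpow u s) by ring.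
  lra.
Qed.

Lemma rpow_lt_of_small s e : 0 < s -> 0 < e ->
  exists d, 0 < d /\ forall t, t < d -> rpow t s < e.
Proof.
  intros Hs He. exists (rpow e (/ s)). split; [apply rpow_gt0, He|].
  intros t Ht. destruct (Rle_lt_dec t 0) as [Ht0 | Ht0].
  - rewrite rpow_nonpos by exact Ht0. exact He.
  - rewrite <- (rpow_inv e (/ s)), Rinv_inv by (try apply Rinv_0_lt_compat; lra).
    apply rpow_lt; lra.
Qed.

Lemma Un_cv_rpow s (u : nat -> R) t : 0 < s -> (forall n, 0 <= u n) -> 0 <= t ->
  Un_cv u t -> Un_cv (fun n => rpow (u n) s) (rpow t s).
Proof.
  intros Hs Hu Ht Hcv e He. set (B := rpow (t + 1) s).
  assert (HB : 0 <= B) by apply rpow_nonneg.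
  destruct (rpow_dist_le s (e / (4 * (B + 1))) Hs) as [D [HD Hdist]].
  { apply Rdiv_lt_0_compat; lra. }
  destruct (rpow_lt_of_small s (e / (2 * (D + 1))) Hs) as [d [Hd Hsmall]].
  { apply Rdiv_lt_0_compat; lra. }
  destruct (Hcv (Rmin 1 d)) as [N HN]; [apply Rmin_pos; lra|].
  exists N. intros n Hn. specialize (HN n Hn). unfold R_dist in *.
  assert (Hclose : Rabs (u n - t) < 1 /\ Rabs (u n - t) < d)
    by (pose proof (Rmin_l 1 d); pose proof (Rmin_r 1 d); lra).
  assert (Hun : rpow (u n) s <= B)
    by (apply rpow_le; [lra | destruct Hclose as [Hclose _]; apply Rabs_def2 in Hclose; lra]).
  assert (Htn : rpow t s <= B) by (apply rpow_le; lra).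
  assert (Hm : D * rpow (Rabs (u n - t)) s <= e / 2).
  { apply Rle_trans with (D * (e / (2 * (D + 1)))).
    - apply Rmult_le_compat_l; [lra|]. left; apply Hsmall; lra.
    - apply Rmult_le_reg_l with (2 * (D + 1)); [lra|]. field_simplify; nra. }
  assert (Hg : e / (4 * (B + 1)) * (rpow (u n) s + rpow t s) < e / 2).
  { apply Rle_lt_trans with (e / (4 * (B + 1)) * (2 * B)).
    - apply Rmult_le_compat_l; [apply Rlt_le, Rdiv_lt_0_compat|]; lra.
    - apply Rmult_lt_reg_l with (4 * (B + 1)); [lra|]. field_simplify; nra. }
  eapply Rle_lt_trans; [apply (Hdist (Rabs (u n - t))); auto; lra | lra].
Qed.

(** * Sequences and series *)

Definition strictly_increasing (phi : nat -> nat) := forall n, (phi n < phi (S n))%nat.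

Lemma strictly_increasing_lt phi : strictly_increasing phi ->
  forall m n, (m < n)%nat -> (phi m < phi n)%nat.
Proof. intros H m n Hmn. induction Hmn; [apply H | specialize (H m0); lia]. Qed.

Lemma strictly_increasing_ge phi : strictly_increasing phi -> forall n, (n <= phi n)%nat.
Proof. intros H n. induction n; [lia | specialize (H n); lia]. Qed.

Lemma strictly_increasing_comp phi psi : strictly_increasing phi -> strictly_increasing psi ->
  strictly_increasing (fun n => phi (psi n)).
Proof. intros Hphi Hpsi n. apply strictly_increasing_lt; auto. Qed.

Lemma Un_cv_subseq (a : nat -> R) l phi : strictly_increasing phi ->
  Un_cv a l -> Un_cv (fun n => a (phi n)) l.
Proof.
  intros Hphi H e He. destruct (H e He) as [N HN]. exists N. intros n Hn.
  apply HN. pose proof (strictly_increasing_ge phi Hphi n). lia.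
Qed.

Lemma Un_cv_of_dist_lt_inv (a : nat -> R) l :
  (forall n, Rabs (a n - l) < / (INR n + 1)) -> Un_cv a l.
Proof.
  intros H e He. destruct (INR_archimed 1 (/ e)) as [N HN]; [lra|].
  exists N. intros n Hn. unfold R_dist. eapply Rlt_trans; [apply H|].
  assert (Hie : 0 < / e) by (apply Rinv_0_lt_compat, He).
  apply le_INR in Hn. rewrite <- (Rinv_inv e). apply Rinv_lt_contravar; nra.
Qed.

Lemma not_Un_cv_0 (a : nat -> R) : ~ Un_cv a 0 ->
  exists e, 0 < e /\ forall N, exists n, (N <= n)%nat /\ e <= Rabs (a n).
Proof.
  intros H. apply NNPP. intros Hno. apply H. intros e He.
  apply NNPP. intros HN. apply Hno. exists e. split; [exact He|]. intros N.
  apply NNPP. intros Hn. apply HN. exists N. intros n Hge. unfold R_dist.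
  rewrite Rminus_0_r. apply Rnot_le_lt. intros Hle. apply Hn. exists n. auto.
Qed.

Lemma Un_cv_dist_le (a b : nat -> R) l : (forall n, Rabs (a n - l) <= b n) -> Un_cv b 0 ->
  Un_cv a l.
Proof.
  intros H Hb e He. destruct (Hb e He) as [N HN]. exists N. intros n Hn.
  specialize (HN n Hn). unfold R_dist in *. rewrite Rminus_0_r in HN.
  eapply Rle_lt_trans; [apply H|]. pose proof (Rle_abs (b n)). lra.
Qed.

Lemma Un_cv_const c : Un_cv (fun _ => c) c.
Proof. intros e He. exists O. intros n _. unfold R_dist. rewrite Rminus_diag, Rabs_R0. lra. Qed.

Lemma Un_cv_dist_0 (a : nat -> R) l : Un_cv a l -> Un_cv (fun n => Rabs (a n - l)) 0.
Proof.
  intros H e He. destruct (H e He) as [N HN]. exists N. intros n Hn. unfold R_dist in *.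
  rewrite Rminus_0_r, Rabs_Rabsolu. apply HN, Hn.
Qed.

Lemma Un_cv_sum_f_R0 (f : nat -> nat -> R) (g : nat -> R) N :
  (forall k, Un_cv (fun n => f n k) (g k)) ->
  Un_cv (fun n => sum_f_R0 (f n) N) (sum_f_R0 g N).
Proof.
  intros H. induction N; [apply H | apply CV_plus; [exact IHN | apply H]].
Qed.

Lemma infinite_sum_plus a b la lb : infinite_sum a la -> infinite_sum b lb ->
  infinite_sum (fun k => a k + b k) (la + lb).
Proof.
  intros Ha Hb. eapply Un_cv_ext; [|exact (CV_plus _ _ _ _ Ha Hb)].
  intros n. symmetry. apply sum_plus.
Qed.

Lemma infinite_sum_minus a b la lb : infinite_sum a la -> infinite_sum b lb ->
  infinite_sum (fun k => a k - b k) (la - lb).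
Proof.
  intros Ha Hb. eapply Un_cv_ext; [|exact (CV_minus _ _ _ _ Ha Hb)].
  intros n. symmetry. apply minus_sum.
Qed.

Lemma infinite_sum_scal a la c : infinite_sum a la -> infinite_sum (fun k => c * a k) (c * la).
Proof.
  intros Ha. eapply Un_cv_ext; [|exact (CV_mult _ _ _ _ (Un_cv_const c) Ha)].
  intros n. simpl. rewrite scal_sum. apply sum_eq. intros; ring.
Qed.

Lemma infinite_sum_ext a b l : (forall k, a k = b k) -> infinite_sum a l -> infinite_sum b l.
Proof. intros E. apply Un_cv_ext. intros n. apply sum_eq. auto. Qed.

Lemma sum_f_R0_growing a : (forall k, 0 <= a k) -> Un_growing (sum_f_R0 a).
Proof. intros H n. rewrite tech5. specialize (H (S n)). lra. Qed.

Lemma infinite_sum_partial_le a l n : (forall k, 0 <= a k) -> infinite_sum a l ->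
  sum_f_R0 a n <= l.
Proof. intros H0 H. apply growing_ineq; [apply sum_f_R0_growing|]; assumption. Qed.

Lemma infinite_sum_term_le a l n : (forall k, 0 <= a k) -> infinite_sum a l -> a n <= l.
Proof.
  intros H0 H. apply Rle_trans with (sum_f_R0 a n); [|apply infinite_sum_partial_le; auto].
  destruct n; [simpl; lra|]. rewrite tech5. pose proof (cond_pos_sum a n H0). lra.
Qed.

Lemma infinite_sum_nonneg a l : (forall k, 0 <= a k) -> infinite_sum a l -> 0 <= l.
Proof. intros. apply Rle_trans with (a O); [auto | apply infinite_sum_term_le; auto]. Qed.

Lemma infinite_sum_pos a l m : (forall k, 0 <= a k) -> 0 < a m -> infinite_sum a l -> 0 < l.
Proof. intros. apply Rlt_le_trans with (a m); [|apply infinite_sum_term_le]; auto. Qed.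

Lemma infinite_sum_le a b la lb : (forall k, a k <= b k) ->
  infinite_sum a la -> infinite_sum b lb -> la <= lb.
Proof.
  intros H Ha Hb. apply Rle_cv_lim with (sum_f_R0 a) (sum_f_R0 b); auto.
  intros n. apply sum_Rle. auto.
Qed.

Lemma infinite_sum_of_bounded a B : (forall k, 0 <= a k) -> (forall n, sum_f_R0 a n <= B) ->
  exists l, infinite_sum a l /\ l <= B.
Proof.
  intros H0 HB. destruct (growing_cv _ (sum_f_R0_growing a H0)) as [l Hl].
  { exists B. intros x [n ->]. apply HB. }
  exists l. split; [exact Hl|].
  apply Rle_cv_lim with (sum_f_R0 a) (fun _ => B); auto. apply Un_cv_const.
Qed.

Lemma infinite_sum_comparison a b lb : (forall k, 0 <= a k <= b k) -> infinite_sum b lb ->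
  exists la, infinite_sum a la /\ la <= lb.
Proof.
  intros H Hb. apply infinite_sum_of_bounded; [intros k; apply H|].
  intros n. apply Rle_trans with (sum_f_R0 b n).
  - apply sum_Rle. intros; apply H.
  - apply infinite_sum_partial_le; [intros k; specialize (H k); lra | exact Hb].
Qed.

Lemma sum_f_R0_stationary a N n : (forall k, (N < k)%nat -> a k = 0) -> (N <= n)%nat ->
  sum_f_R0 a n = sum_f_R0 a N.
Proof. intros H Hn. induction Hn; [reflexivity | rewrite tech5, H, IHHn by lia; ring]. Qed.

Lemma infinite_sum_finite a N : (forall k, (N < k)%nat -> a k = 0) ->
  infinite_sum a (sum_f_R0 a N).
Proof.
  intros H e He. exists N. intros n Hn. unfold R_dist.
  rewrite (sum_f_R0_stationary a N n H Hn), Rminus_diag, Rabs_R0. lra.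
Qed.

Lemma infinite_sum_single m v : infinite_sum (fun k => if Nat.eqb k m then v else 0) v.
Proof.
  set (a := fun k => if Nat.eqb k m then v else 0).
  assert (Ha : sum_f_R0 a m = v).
  { destruct m; [reflexivity|]. unfold a. rewrite tech5, Nat.eqb_refl, (sum_eq _ (fun _ => 0)).
    - rewrite sum_cte. ring.
    - intros i Hi. destruct (Nat.eqb_spec i (S m)); [lia | reflexivity]. }
  rewrite <- Ha. apply infinite_sum_finite.
  intros k Hk. unfold a. destruct (Nat.eqb_spec k m); [lia | reflexivity].
Qed.

Definition tail (N : nat) (a : nat -> R) (k : nat) : R := if Nat.leb k N then 0 else a k.

Lemma infinite_sum_tail a l N : infinite_sum a l ->
  infinite_sum (tail N a) (l - sum_f_R0 a N).
Proof.
  intros H. set (head := fun k => if Nat.leb k N then a k else 0).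
  assert (Hhead : infinite_sum head (sum_f_R0 a N)).
  { replace (sum_f_R0 a N) with (sum_f_R0 head N).
    - apply infinite_sum_finite. intros k Hk. unfold head. destruct (Nat.leb_spec k N); [lia | reflexivity].
    - apply sum_eq. intros i Hi. unfold head. destruct (Nat.leb_spec i N); [reflexivity | lia]. }
  pose proof (infinite_sum_plus _ _ _ _ H (infinite_sum_scal _ _ (-1) Hhead)) as Hs.
  replace (l - sum_f_R0 a N) with (l + -1 * sum_f_R0 a N) by ring.
  apply infinite_sum_ext with (2 := Hs). intros k. unfold tail, head. destruct (Nat.leb k N); ring.
Qed.

(* Tannery's theorem, with a domination that may cost an arbitrarily small multiple [g] of
   a family [h] with bounded sums. *)
Lemma infinite_sum_cv_0_dominated (f h : nat -> nat -> R) (F sh : nat -> R) H :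
  (forall n, infinite_sum (f n) (F n)) -> (forall k, Un_cv (fun n => f n k) 0) ->
  (forall n k, 0 <= h n k) -> (forall n, infinite_sum (h n) (sh n)) -> (forall n, sh n <= H) ->
  (forall g, 0 < g -> exists E SE, (forall k, 0 <= E k) /\ infinite_sum E SE /\
     forall n k, Rabs (f n k) <= g * h n k + E k) ->
  Un_cv F 0.
Proof.
  intros Hf Hcv Hh0 Hh HH Hdom e He.
  assert (HH0 : 0 <= H)
    by (eapply Rle_trans; [apply (infinite_sum_nonneg _ _ (Hh0 O) (Hh O)) | apply HH]).
  set (g := e / (4 * (H + 1))).
  assert (Hg : 0 < g) by (apply Rdiv_lt_0_compat; lra).
  assert (HgH : g * H < e / 4)
    by (unfold g; apply Rmult_lt_reg_l with (4 * (H + 1)); [lra | field_simplify; nra]).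
  destruct (Hdom g Hg) as [E [SE [HE0 [HE Hle]]]].
  destruct (HE (e / 4)) as [N0 HN0]; [lra|].
  specialize (HN0 N0 (le_n _)). unfold R_dist in HN0. apply Rabs_def2 in HN0.
  destruct (Un_cv_sum_f_R0 f (fun _ => 0) N0 Hcv (e / 4)) as [N1 HN1]; [lra|].
  exists N1. intros n Hn. specialize (HN1 n Hn). unfold R_dist in *.
  rewrite sum_cte, Rmult_0_l, Rminus_0_r in HN1. rewrite Rminus_0_r.
  pose proof (infinite_sum_tail _ _ N0 (Hf n)) as Tf.
  pose proof (infinite_sum_plus _ _ _ _
    (infinite_sum_scal _ _ g (infinite_sum_tail _ _ N0 (Hh n))) (infinite_sum_tail _ _ N0 HE)) as Tdom.
  set (X := g * (sh n - sum_f_R0 (h n) N0) + (SE - sum_f_R0 E N0)) in Tdom.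
  assert (Hdomt : forall k, Rabs (tail N0 (f n) k) <= g * tail N0 (h n) k + tail N0 E k).
  { intros k. unfold tail. destruct (Nat.leb k N0); [rewrite Rabs_R0; lra | apply Hle]. }
  assert (Up : F n - sum_f_R0 (f n) N0 <= X).
  { apply (infinite_sum_le _ _ _ _ (fun k => Rle_trans _ _ _ (Rle_abs _) (Hdomt k)) Tf Tdom). }
  assert (Lo : -1 * X <= F n - sum_f_R0 (f n) N0).
  { eapply infinite_sum_le; [|exact (infinite_sum_scal _ _ (-1) Tdom) | exact Tf].
    intros k. pose proof (Rle_abs (- tail N0 (f n) k)). rewrite Rabs_Ropp in *.
    specialize (Hdomt k). lra. }
  assert (HX : X < e / 4 + e / 4).
  { assert (0 <= sum_f_R0 (h n) N0) by (apply cond_pos_sum; auto).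
    assert (g * (sh n - sum_f_R0 (h n) N0) <= g * H) by (apply Rmult_le_compat_l; [lra | specialize (HH n); lra]).
    unfold X. lra. }
  apply Rabs_def2 in HN1. apply Rabs_def1; lra.
Qed.

Lemma linear_beats_power r A C d : 0 < r < 1 -> 0 <= A -> 0 <= C -> 0 < d ->
  exists j : nat, rpow (A + INR j * C) r < INR j * d.
Proof.
  intros Hr HA HC Hd. set (c := rpow (A + C) r / d).
  assert (Hc : 0 <= c) by (apply Rmult_le_pos; [apply rpow_nonneg | left; apply Rinv_0_lt_compat, Hd]).
  set (M := rpow c (/ (1 - r))).
  destruct (INR_archimed 1 (Rmax M 1)) as [j Hj]; [lra|].
  exists j.
  pose proof (Rmax_l M 1). pose proof (Rmax_r M 1).
  assert (HM : 0 <= M) by apply rpow_nonneg.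
  assert (Hgrow : c < rpow (INR j) (1 - r)).
  { replace c with (rpow M (1 - r)) by (unfold M; rewrite rpow_mult, Rinv_l, rpow_1; lra).
    apply rpow_lt; lra. }
  assert (Hsplit : INR j = rpow (INR j) r * rpow (INR j) (1 - r))
    by (rewrite <- rpow_plus, Rplus_minus, rpow_1; lra).
  assert (Hjr : 0 < rpow (INR j) r) by (apply rpow_gt0; lra).
  apply Rle_lt_trans with (rpow (INR j) r * rpow (A + C) r).
  - rewrite <- rpow_mult_distr by lra. apply rpow_le; nra.
  - rewrite Hsplit at 2. rewrite Rmult_assoc. apply Rmult_lt_compat_l; [exact Hjr|].
    unfold c in Hgrow. apply Rmult_lt_reg_r with (/ d); [apply Rinv_0_lt_compat, Hd|].
    rewrite Rmult_assoc, Rinv_r, Rmult_1_r by lra. exact Hgrow.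
Qed.

(* If each step can add [d] to [F] at the price of adding at most [C] to [P], then
   [F] grows linearly along some orbit while [F <= P ^ r] with [r < 1] caps it sublinearly. *)
Lemma no_linear_growth {X : Type} (S : X -> Prop) (P F : X -> R) (z0 : X) r A C d :
  0 < r < 1 -> 0 <= A -> 0 <= C -> 0 < d ->
  S z0 -> P z0 <= A -> 0 <= F z0 ->
  (forall z, S z -> exists z', S z' /\ P z' <= P z + C /\ F z + d <= F z') ->
  (forall z, S z -> F z <= rpow (P z) r) -> False.
Proof.
  intros Hr HA HC Hd Hz0 HP0 HF0 Hstep Hcap.
  assert (Horbit : forall j : nat, exists z, S z /\ P z <= A + INR j * C /\ INR j * d <= F z).
  { induction j as [|j [z [Hz [HPz HFz]]]].
    - exists z0. simpl. repeat split; [exact Hz0 | lra | lra].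
    - destruct (Hstep z Hz) as [z' [Hz' [HP' HF']]]. exists z'. rewrite S_INR. repeat split; [exact Hz' | lra | lra]. }
  destruct (linear_beats_power r A C d Hr HA HC Hd) as [j Hj].
  destruct (Horbit j) as [z [Hz [HPz HFz]]].
  pose proof (Hcap z Hz). pose proof (rpow_le _ _ r (proj1 Hr) HPz). lra.
Qed.

(** * Scalars and the spaces l_p *)

Class ScalarLaws (K : ScalarField) := {
  sabs_nonneg : forall a, 0 <= sabs K a;
  sabs_add_le : forall a b, sabs K (sadd K a b) <= sabs K a + sabs K b;
  sabs_mul : forall a b, sabs K (smul K a b) = sabs K a * sabs K b;
  sabs_opp : forall a, sabs K (sopp K a) = sabs K a;
  sabs_sub_sym : forall a b, sabs K (sadd K a (sopp K b)) = sabs K (sadd K b (sopp K a));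
  sadd_sub_cancel : forall a b, sadd K a (sadd K b (sopp K a)) = b;
  sadd_sub_cancel_l : forall a b, sadd K (sadd K a b) (sopp K a) = b;
  sadd_sub_cancel_r : forall a b, sadd K (sadd K a b) (sopp K b) = a;
  smul_add_r : forall c a b, smul K c (sadd K a b) = sadd K (smul K c a) (smul K c b);
  smul_left_comm : forall c a b, smul K c (smul K a b) = smul K a (smul K c b);
  ofR : R -> scal K;
  sabs_ofR : forall r, sabs K (ofR r) = Rabs r;
  Re : scal K -> R;
  Re_add : forall a b, Re (sadd K a b) = Re a + Re b;
  Re_le_sabs : forall a, Rabs (Re a) <= sabs K a;
  exists_rotation : forall w, exists c, sabs K c = 1 /\ Re (smul K c w) = sabs K w;
  bounded_cv_subseq : forall (a : nat -> scal K) B, (forall n, sabs K (a n) <= B) ->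
    exists phi l, strictly_increasing phi /\
      Un_cv (fun n => sabs K (sadd K (a (phi n)) (sopp K l))) 0 }.

Section Lp.
Context {K : ScalarField} {SL : ScalarLaws K}.
Local Notation "| a |" := (sabs K a) (at level 30).

Lemma sabs_add_sub_abs_l a b : Rabs (|sadd K a b| - |a|) <= |b|.
Proof.
  pose proof (sabs_add_le a b). pose proof (sabs_add_le (sadd K a b) (sopp K b)).
  rewrite sadd_sub_cancel_r, sabs_opp in *. apply Rabs_le. lra.
Qed.

Lemma sabs_add_sub_abs_r a b : Rabs (|sadd K a b| - |b|) <= |a|.
Proof.
  pose proof (sabs_add_le a b). pose proof (sabs_add_le (sadd K a b) (sopp K a)).
  rewrite sadd_sub_cancel_l, sabs_opp in *. apply Rabs_le. lra.
Qed.

Lemma sabs_sub_abs a b : Rabs (|a| - |b|) <= |sadd K a (sopp K b)|.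
Proof.
  pose proof (sabs_add_sub_abs_l b (sadd K a (sopp K b))).
  rewrite sadd_sub_cancel in H. exact H.
Qed.

Definition lp_term (s : R) (x : seqK K) (k : nat) : R := rpow (|x k|) s.

Lemma lp_sum_spec s x : in_lp K s x -> infinite_sum (lp_term s x) (lp_sum K s x).
Proof.
  intros Hx. unfold lp_sum. destruct (excluded_middle_informative (in_lp K s x)) as [Hx' |];
    [exact (proj2_sig (constructive_indefinite_description _ Hx')) | contradiction].
Qed.

Lemma lp_sum_unique s x l : infinite_sum (lp_term s x) l -> lp_sum K s x = l.
Proof.
  intros H. apply (uniqueness_sum (lp_term s x)); [apply lp_sum_spec; exists l|]; exact H.
Qed.

Lemma lp_sum_nonneg s x : 0 <= lp_sum K s x.
Proof.
  unfold lp_sum. destruct (excluded_middle_informative (in_lp K s x)) as [Hx|]; [|lra].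
  apply (infinite_sum_nonneg (lp_term s x)); [intros; apply rpow_nonneg|].
  exact (proj2_sig (constructive_indefinite_description _ Hx)).
Qed.

Lemma lp_sum_term_le s x k : in_lp K s x -> rpow (|x k|) s <= lp_sum K s x.
Proof. intros Hx. apply (infinite_sum_term_le (lp_term s x)); [intros; apply rpow_nonneg | apply lp_sum_spec, Hx]. Qed.

Lemma lp_sum_dominated s x y : 0 < s -> in_lp K s x -> (forall k, |y k| <= |x k|) ->
  in_lp K s y /\ lp_sum K s y <= lp_sum K s x.
Proof.
  intros Hs Hx Hyx.
  destruct (infinite_sum_comparison (lp_term s y) (lp_term s x) (lp_sum K s x)) as [l [Hl Hle]].
  - intros k. split; [apply rpow_nonneg | apply rpow_le; auto].
  - apply lp_sum_spec, Hx.
  - split; [exists l; exact Hl | rewrite (lp_sum_unique s y l Hl); exact Hle].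
Qed.

Lemma lp_sum_abs_eq s x y : (forall k, |y k| = |x k|) -> lp_sum K s y = lp_sum K s x.
Proof.
  intros Hyx. assert (E : lp_term s y = lp_term s x).
  { apply functional_extensionality. intros k. unfold lp_term. rewrite Hyx. reflexivity. }
  destruct (classic (in_lp K s x)) as [Hx | Hx].
  - apply lp_sum_unique. rewrite E. apply lp_sum_spec, Hx.
  - assert (Hy : ~ in_lp K s y) by (intros [l Hl]; apply Hx; exists l; change (infinite_sum (lp_term s x) l); rewrite <- E; exact Hl).
    unfold lp_sum. destruct (excluded_middle_informative (in_lp K s y)); [contradiction|].
    destruct (excluded_middle_informative (in_lp K s x)); [contradiction | reflexivity].
Qed.

Lemma lp_sum_add_le s x y z : 0 < s -> in_lp K s x -> in_lp K s y ->
  (forall k, |z k| <= |x k| + |y k|) ->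
  in_lp K s z /\ lp_sum K s z <= rpow 2 s * lp_sum K s x + rpow 2 s * lp_sum K s y.
Proof.
  intros Hs Hx Hy Hz.
  destruct (infinite_sum_comparison (lp_term s z)
    (fun k => rpow 2 s * lp_term s y k + rpow 2 s * lp_term s x k)
    (rpow 2 s * lp_sum K s y + rpow 2 s * lp_sum K s x)) as [l [Hl Hle]].
  - intros k. split; [apply rpow_nonneg|]. unfold lp_term.
    pose proof (rpow_plus_le_split s (|x k|) (|y k|) 1 Hs (sabs_nonneg _) (sabs_nonneg _) Rlt_0_1) as E.
    rewrite Rinv_1 in E. replace (1 + 1) with 2 in E by ring.
    eapply Rle_trans; [apply rpow_le; [exact Hs | apply Hz] | exact E].
  - apply infinite_sum_plus; apply infinite_sum_scal; apply lp_sum_spec; assumption.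
  - split; [exists l; exact Hl | rewrite (lp_sum_unique s z l Hl); lra].
Qed.

Lemma lp_sum_vsub_le s x y : 0 < s -> in_lp K s x -> in_lp K s y ->
  in_lp K s (vsub K x y) /\
  lp_sum K s (vsub K x y) <= rpow 2 s * lp_sum K s x + rpow 2 s * lp_sum K s y.
Proof.
  intros Hs Hx Hy. apply lp_sum_add_le; [exact Hs | exact Hx | exact Hy|].
  intros k. unfold vsub. rewrite <- (sabs_opp (y k)). apply sabs_add_le.
Qed.

Lemma lp_sum_scale s c x : 0 < s -> in_lp K s x ->
  in_lp K s (vscale K c x) /\ lp_sum K s (vscale K c x) = rpow (|c|) s * lp_sum K s x.
Proof.
  intros Hs Hx.
  assert (E : infinite_sum (lp_term s (vscale K c x)) (rpow (|c|) s * lp_sum K s x)).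
  { apply infinite_sum_ext with (fun k => rpow (|c|) s * lp_term s x k).
    - intros k. unfold lp_term, vscale. rewrite sabs_mul, rpow_mult_distr by apply sabs_nonneg. reflexivity.
    - apply infinite_sum_scal, lp_sum_spec, Hx. }
  split; [eexists; exact E | apply lp_sum_unique, E].
Qed.

Lemma lp_norm_scale s c x : 0 < s -> in_lp K s x ->
  lp_norm K s (vscale K c x) = |c| * lp_norm K s x.
Proof.
  intros Hs Hx. unfold lp_norm. rewrite (proj2 (lp_sum_scale s c x Hs Hx)).
  rewrite rpow_mult_distr, rpow_mult by (apply rpow_nonneg || apply lp_sum_nonneg || apply sabs_nonneg).
  replace (s * (1 / s)) with 1 by (field; lra). rewrite rpow_1 by apply sabs_nonneg. reflexivity.
Qed.

Lemma lp_norm_eq_1 s x : 0 < s -> (lp_norm K s x = 1 <-> lp_sum K s x = 1).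
Proof.
  intros Hs. unfold lp_norm. split; intros E.
  - apply rpow_eq_1 with (1 / s); [apply lp_sum_nonneg | apply Rdiv_lt_0_compat; lra | exact E].
  - rewrite E. apply rpow_1_l.
Qed.

Lemma lp_sum_gt_of_lp_norm_gt s x t : 0 < s -> rpow t (1 / s) < lp_norm K s x -> t < lp_sum K s x.
Proof.
  intros Hs H. apply Rnot_le_lt. intros Hle. unfold lp_norm in H.
  pose proof (rpow_le _ _ (1 / s) ltac:(apply Rdiv_lt_0_compat; lra) Hle). lra.
Qed.

Lemma lp_norm_lt_of_lp_sum_lt s x t : 0 < s -> 0 < t -> lp_sum K s x < rpow t s -> lp_norm K s x < t.
Proof.
  intros Hs Ht H. unfold lp_norm. rewrite <- (rpow_inv t s) by lra. unfold Rdiv. rewrite Rmult_1_l.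
  apply rpow_lt; [apply Rinv_0_lt_compat, Hs | split; [apply lp_sum_nonneg | exact H]].
Qed.

Lemma lp_sum_add_cv s C u (v : nat -> seqK K) : 0 < s -> in_lp K s u ->
  (forall n, in_lp K s (v n)) -> (forall n, lp_sum K s (v n) <= C) ->
  (forall k, Un_cv (fun n => |v n k|) 0) ->
  Un_cv (fun n => lp_sum K s (vadd K u (v n)) - lp_sum K s u - lp_sum K s (v n)) 0.
Proof.
  intros Hs Hu Hv HC Hcv.
  assert (Huv : forall n, in_lp K s (vadd K u (v n)) /\
    lp_sum K s (vadd K u (v n)) <= rpow 2 s * lp_sum K s u + rpow 2 s * C).
  { intros n. destruct (lp_sum_add_le s u (v n) (vadd K u (v n)) Hs Hu (Hv n)) as [H1 H2];
      [intros k; apply sabs_add_le|].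
    split; [exact H1|]. pose proof (rpow_nonneg 2 s). specialize (HC n). nra. }
  apply (infinite_sum_cv_0_dominated
    (fun n k => lp_term s (vadd K u (v n)) k - lp_term s u k - lp_term s (v n) k)
    (fun n k => lp_term s (vadd K u (v n)) k + lp_term s (v n) k) _
    (fun n => lp_sum K s (vadd K u (v n)) + lp_sum K s (v n))
    (rpow 2 s * lp_sum K s u + rpow 2 s * C + C)).
  - intros n. repeat apply infinite_sum_minus; apply lp_sum_spec; auto. apply Huv.
  - intros k. unfold lp_term.
    assert (HW : Un_cv (fun n => |vadd K u (v n) k|) (|u k|))
      by (apply Un_cv_dist_le with (2 := Hcv k); intros n; apply sabs_add_sub_abs_l).
    assert (HV : Un_cv (fun n => rpow (|v n k|) s) 0).
    { rewrite <- (rpow_0_l s). apply Un_cv_rpow; auto; [intros; apply sabs_nonneg | lra]. }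
    replace 0 with (rpow (|u k|) s - rpow (|u k|) s - 0) by ring.
    apply CV_minus; [apply CV_minus; [|apply Un_cv_const] | exact HV].
    apply Un_cv_rpow; auto; intros; apply sabs_nonneg.
  - intros n k. pose proof (rpow_nonneg (|vadd K u (v n) k|) s). pose proof (rpow_nonneg (|v n k|) s).
    unfold lp_term. lra.
  - intros n. apply infinite_sum_plus; apply lp_sum_spec; auto. apply Huv.
  - intros n. specialize (HC n). specialize (Huv n). lra.
  - intros g Hg. destruct (rpow_add_defect_le s g Hs Hg) as [D [HD Hdefect]].
    exists (fun k => D * lp_term s u k), (D * lp_sum K s u). split; [|split].
    + intros k. apply Rmult_le_pos; [exact HD | apply rpow_nonneg].
    + apply infinite_sum_scal, lp_sum_spec, Hu.
    + intros n k. apply Hdefect; try apply sabs_nonneg. apply sabs_add_sub_abs_r.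
Qed.

Lemma lp_sum_le_of_cv s B (a : nat -> seqK K) x : 0 < s -> (forall n, in_lp K s (a n)) ->
  (forall n, lp_sum K s (a n) <= B) ->
  (forall k, Un_cv (fun n => |sadd K (a n k) (sopp K (x k))|) 0) ->
  in_lp K s x /\ lp_sum K s x <= B.
Proof.
  intros Hs Ha HB Hcv.
  destruct (infinite_sum_of_bounded (lp_term s x) B) as [l [Hl Hle]].
  - intros k. apply rpow_nonneg.
  - intros N. apply Rle_cv_lim with (fun n => sum_f_R0 (lp_term s (a n)) N) (fun _ => B).
    + intros n. eapply Rle_trans; [|apply HB].
      apply infinite_sum_partial_le; [intros; apply rpow_nonneg | apply lp_sum_spec, Ha].
    + apply Un_cv_sum_f_R0. intros k. apply Un_cv_rpow; auto; try (intros; apply sabs_nonneg).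
      apply Un_cv_dist_le with (2 := Hcv k). intros n. apply sabs_sub_abs.
    + apply Un_cv_const.
  - split; [exists l; exact Hl | rewrite (lp_sum_unique s x l Hl); exact Hle].
Qed.

Lemma cv_subseq_total B (g : nat -> scal K) : exists ext : (nat -> nat) * scal K,
  strictly_increasing (fst ext) /\ ((forall n, |g n| <= B) ->
    Un_cv (fun n => |sadd K (g (fst ext n)) (sopp K (snd ext))|) 0).
Proof.
  destruct (classic (forall n, |g n| <= B)) as [Hb | Hb].
  - destruct (bounded_cv_subseq g B Hb) as [phi [l [Hphi Hl]]]. exists (phi, l). auto.
  - exists ((fun n => n), ofR 0). split; [intros n; simpl; lia | contradiction].
Qed.

Definition cv_subseq B g := proj1_sig (constructive_indefinite_description _ (cv_subseq_total B g)).

Lemma cv_subseq_spec B g : strictly_increasing (fst (cv_subseq B g)) /\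
  ((forall n, |g n| <= B) -> Un_cv (fun n => |sadd K (g (fst (cv_subseq B g) n)) (sopp K (snd (cv_subseq B g)))|) 0).
Proof. exact (proj2_sig (constructive_indefinite_description _ (cv_subseq_total B g))). Qed.

(* [nested_subseq a B k] makes the first [k] coordinates of [a] converge. *)
Fixpoint nested_subseq (a : nat -> seqK K) B (k : nat) : nat -> nat :=
  match k with
  | O => fun n => n
  | S k' => fun n => nested_subseq a B k' (fst (cv_subseq B (fun m => a (nested_subseq a B k' m) k')) n)
  end.

Lemma nested_subseq_incr a B k : strictly_increasing (nested_subseq a B k).
Proof.
  induction k; intros n; simpl; [lia|].
  apply strictly_increasing_lt; [exact IHk | apply (proj1 (cv_subseq_spec _ _))].
Qed.

Lemma nested_subseq_refines a B d k : exists rho, strictly_increasing rho /\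
  forall m, nested_subseq a B (d + k) m = nested_subseq a B k (rho m).
Proof.
  induction d as [|d [rho [Hrho E]]].
  - exists (fun m => m). split; [intros n; lia | reflexivity].
  - exists (fun m => rho (fst (cv_subseq B (fun m0 => a (nested_subseq a B (d + k) m0) (d + k)%nat)) m)).
    split; [apply strictly_increasing_comp; [exact Hrho | apply (proj1 (cv_subseq_spec _ _))]|].
    intros m. apply E.
Qed.

Lemma diagonal_subseq (a : nat -> seqK K) B : (forall n k, |a n k| <= B) ->
  exists (phi : nat -> nat) (x : seqK K), strictly_increasing phi /\
    forall k, Un_cv (fun n => |sadd K (a (phi n) k) (sopp K (x k))|) 0.
Proof.
  intros Hb. set (ext k := cv_subseq B (fun m => a (nested_subseq a B k m) k)).
  exists (fun n => nested_subseq a B (S n) n), (fun k => snd (ext k)). split.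
  - intros n. change (nested_subseq a B (S (S n)) (S n)) with
      (nested_subseq a B (S n) (fst (ext (S n)) (S n))).
    pose proof (strictly_increasing_ge _ (proj1 (cv_subseq_spec B
      (fun m => a (nested_subseq a B (S n) m) (S n)))) (S n)) as Hge.
    fold (ext (S n)) in Hge.
    destruct (Nat.eq_dec (fst (ext (S n)) (S n)) (S n)) as [E | E].
    + rewrite E. apply nested_subseq_incr.
    + apply strictly_increasing_lt; [apply nested_subseq_incr | lia].
  - intros k e He. destruct (proj2 (cv_subseq_spec B (fun m => a (nested_subseq a B k m) k))
      (fun n => Hb _ k) e He) as [N HN].
    exists (max N k). intros n Hn.
    destruct (nested_subseq_refines a B (n - k) (S k)) as [rho [Hrho E]].
    replace (n - k + S k)%nat with (S n) in E by lia.
    rewrite E. simpl. apply HN. pose proof (strictly_increasing_ge rho Hrho n). lia.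
Qed.

Lemma lp_bounded_weak_cv_subseq s B (xs : nat -> seqK K) : 0 < s ->
  (forall n, in_lp K s (xs n)) -> (forall n, lp_sum K s (xs n) <= B) ->
  exists phi x, strictly_increasing phi /\ in_lp K s x /\ lp_sum K s x <= B /\
    forall k, Un_cv (fun n => |vsub K (xs (phi n)) x k|) 0.
Proof.
  intros Hs Hxs HB.
  assert (HB0 : 0 <= B) by (apply Rle_trans with (lp_sum K s (xs O)); [apply lp_sum_nonneg | apply HB]).
  assert (Hb : forall n k, |xs n k| <= rpow B (1 / s)).
  { intros n k. apply rpow_le_rev with s; [exact Hs | apply rpow_nonneg|].
    rewrite rpow_mult by exact HB0. replace (1 / s * s) with 1 by (field; lra).
    rewrite rpow_1 by exact HB0. eapply Rle_trans; [apply lp_sum_term_le, Hxs | apply HB]. }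
  destruct (diagonal_subseq xs _ Hb) as [phi [x [Hphi Hcv]]].
  destruct (lp_sum_le_of_cv s B (fun n => xs (phi n)) x Hs (fun n => Hxs _) (fun n => HB _) Hcv)
    as [Hx HPx].
  exists phi, x. auto.
Qed.

End Lp.

(** * The case q < p *)

Lemma lp_norm_apply_le {K : ScalarField} {SL : ScalarLaws K} p q T : 0 < p -> 0 < q ->
  bounded_linear K p q T -> op_norm_is K p q T 1 ->
  forall z, in_lp K p z -> lp_norm K q (T z) <= lp_norm K p z.
Proof.
  intros Hp Hq [Hmaps [_ [Hscale [M HM]]]] [Hub _] z Hz.
  assert (Ht0 : 0 <= lp_norm K p z) by apply rpow_nonneg.
  destruct (Req_dec (lp_norm K p z) 0) as [E | E].
  - specialize (HM z Hz). rewrite E, Rmult_0_r in *. exact HM.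
  - set (t := lp_norm K p z) in *. set (c := ofR (K := K) (/ t)).
    assert (Hc : sabs K c = / t) by (unfold c; rewrite sabs_ofR; apply Rabs_right, Rle_ge, Rlt_le, Rinv_0_lt_compat; lra).
    assert (Hunit : lp_norm K q (T (vscale K c z)) <= 1).
    { apply Hub. exists (vscale K c z). split; [apply lp_sum_scale; assumption|]. split; [|reflexivity].
      rewrite lp_norm_scale, Hc by assumption. unfold t. field. exact E. }
    rewrite Hscale, lp_norm_scale, Hc in Hunit by auto.
    apply Rmult_le_reg_l with (/ t); [apply Rinv_0_lt_compat; lra|]. rewrite Rinv_l by exact E. exact Hunit.
Qed.

Section SmallerTargetExponent.
Context {K : ScalarField} {SL : ScalarLaws K}.
Local Notation "| a |" := (sabs K a) (at level 30).
Variables (p q : R) (T : seqK K -> seqK K).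
Hypotheses (Hq : 0 < q) (Hqp : q < p) (Hp : 1 < p).
Hypothesis T_maps : forall x, in_lp K p x -> in_lp K q (T x).
Hypothesis T_add : forall x y, in_lp K p x -> in_lp K p y -> T (vadd K x y) = vadd K (T x) (T y).
Hypothesis T_scale : forall a x, in_lp K p x -> T (vscale K a x) = vscale K a (T x).
Hypothesis T_contraction : forall x, in_lp K p x -> lp_norm K q (T x) <= lp_norm K p x.

Let Hp0 : 0 < p. Proof. lra. Qed.

Lemma op_lp_sum_le z : in_lp K p z -> lp_sum K q (T z) <= rpow (lp_sum K p z) (q / p).
Proof.
  intros Hz. pose proof (rpow_le _ _ q Hq (T_contraction z Hz)) as H. unfold lp_norm in H.
  rewrite !rpow_mult in H by apply lp_sum_nonneg.
  replace (1 / q * q) with 1 in H by (field; lra). replace (1 / p * q) with (q / p) in H by (field; lra).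
  rewrite rpow_1 in H by apply lp_sum_nonneg. exact H.
Qed.

Lemma op_coord_le z k : in_lp K p z -> |T z k| <= rpow (lp_sum K p z) (1 / p).
Proof.
  intros Hz. eapply Rle_trans; [|apply T_contraction, Hz].
  rewrite <- (rpow_inv (|T z k|) q) by (apply sabs_nonneg || exact Hq).
  unfold lp_norm. rewrite <- Rdiv_1_l. apply rpow_le; [apply Rdiv_lt_0_compat; lra|].
  apply lp_sum_term_le, T_maps, Hz.
Qed.

Section WeaklyNull.
Variables (C : R) (y : nat -> seqK K).
Hypotheses (Hy : forall n, in_lp K p (y n)) (HyC : forall n, lp_sum K p (y n) <= C)
  (Hy0 : forall k, Un_cv (fun n => |y n k|) 0).

Let HC : 0 <= C. Proof. apply Rle_trans with (lp_sum K p (y O)); [apply lp_sum_nonneg | apply HyC]. Qed.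

(* Adding far-out, suitably rotated copies of [y n] makes [Re (T z k0)] grow linearly
   while [lp_sum p z] also grows linearly, against [|T z k0| <= (lp_sum p z) ^ (1/p)]. *)
Lemma op_coord_cv_0 k0 : Un_cv (fun n => |T (y n) k0|) 0.
Proof.
  apply NNPP. intros Hno. destruct (not_Un_cv_0 _ Hno) as [e [He Hfreq]].
  destruct (choice (fun n c => |c| = 1 /\ Re (smul K c (T (y n) k0)) = |T (y n) k0|))
    as [c Hc]; [intros n; apply exists_rotation|].
  set (v n := vscale K (c n) (y n)).
  assert (Hv : forall n, in_lp K p (v n) /\ lp_sum K p (v n) = lp_sum K p (y n)).
  { intros n. destruct (lp_sum_scale p (c n) (y n) Hp0 (Hy n)) as [H1 H2].
    unfold v. rewrite H2, (proj1 (Hc n)), rpow_1_l, Rmult_1_l. auto. }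
  assert (HReTv : forall n, Re (T (v n) k0) = |T (y n) k0|).
  { intros n. unfold v. rewrite T_scale by apply Hy. apply (proj2 (Hc n)). }
  assert (Hv0 : forall k, Un_cv (fun n => |v n k|) 0).
  { intros k. eapply Un_cv_ext; [|apply (Hy0 k)]. intros n. unfold v, vscale.
    rewrite sabs_mul, (proj1 (Hc n)), Rmult_1_l. reflexivity. }
  destruct (Hfreq O) as [n0 [_ Hn0]].
  apply (no_linear_growth (in_lp K p) (lp_sum K p) (fun z => Re (T z k0)) (v n0)
    (1 / p) C (C + 1) e); try lra.
  - split; [apply Rdiv_lt_0_compat | apply Rmult_lt_reg_l with p; field_simplify]; lra.
  - apply Hv.
  - rewrite (proj2 (Hv n0)). apply HyC.
  - rewrite HReTv. apply sabs_nonneg.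
  - intros z Hz.
    destruct (lp_sum_add_cv p C z v Hp0 Hz (fun n => proj1 (Hv n))
      (fun n => eq_ind_r (fun t => t <= C) (HyC n) (proj2 (Hv n))) Hv0 1) as [N HN]; [lra|].
    destruct (Hfreq N) as [n [Hn Hen]]. specialize (HN n Hn).
    unfold R_dist in HN. rewrite Rminus_0_r in HN. apply Rabs_def2 in HN.
    rewrite Rabs_right in Hen by apply Rle_ge, sabs_nonneg.
    exists (vadd K z (v n)). split; [|split].
    + apply (lp_sum_add_le p z (v n)); [exact Hp0 | exact Hz | apply Hv | intros; apply sabs_add_le].
    + rewrite (proj2 (Hv n)) in HN. specialize (HyC n). lra.
    + rewrite T_add by (apply Hz || apply Hv). unfold vadd. rewrite Re_add, HReTv. lra.
  - intros z Hz. pose proof (Re_le_sabs (T z k0)). pose proof (Rle_abs (Re (T z k0))).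
    pose proof (op_coord_le z k0 Hz). simpl. lra.
Qed.

(* The same growth argument, now adding the copies [y n] themselves:
   [lp_sum q (T z)] would grow linearly but is capped by [(lp_sum p z) ^ (q/p)]. *)
Lemma op_lp_sum_cv_0 : Un_cv (fun n => lp_sum K q (T (y n))) 0.
Proof.
  apply NNPP. intros Hno. destruct (not_Un_cv_0 _ Hno) as [e [He Hfreq]].
  assert (HTy : forall n, in_lp K q (T (y n)) /\ lp_sum K q (T (y n)) <= rpow C (q / p)).
  { intros n. split; [apply T_maps, Hy|]. eapply Rle_trans; [apply op_lp_sum_le, Hy|].
    apply rpow_le; [apply Rdiv_lt_0_compat; lra | apply HyC]. }
  destruct (Hfreq O) as [n0 [_ Hn0]].
  apply (no_linear_growth (in_lp K p) (lp_sum K p) (fun z => lp_sum K q (T z)) (y n0)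
    (q / p) C (C + 1) (e / 2)); try lra; auto.
  - split; [apply Rdiv_lt_0_compat | apply Rmult_lt_reg_l with p; field_simplify]; lra.
  - apply lp_sum_nonneg.
  - intros z Hz.
    destruct (lp_sum_add_cv p C z y Hp0 Hz Hy HyC Hy0 1) as [N1 HN1]; [lra|].
    destruct (lp_sum_add_cv q (rpow C (q / p)) (T z) (fun n => T (y n)) Hq (T_maps z Hz)
      (fun n => proj1 (HTy n)) (fun n => proj2 (HTy n)) op_coord_cv_0 (e / 2)) as [N2 HN2]; [lra|].
    destruct (Hfreq (max N1 N2)) as [n [Hn Hen]].
    specialize (HN1 n ltac:(lia)). specialize (HN2 n ltac:(lia)). unfold R_dist in HN1, HN2.
    rewrite Rminus_0_r in HN1, HN2. apply Rabs_def2 in HN1. apply Rabs_def2 in HN2.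
    rewrite Rabs_right in Hen by apply Rle_ge, lp_sum_nonneg.
    exists (vadd K z (y n)). split; [|split].
    + apply (lp_sum_add_le p z (y n)); [exact Hp0 | exact Hz | apply Hy | intros; apply sabs_add_le].
    + specialize (HyC n). lra.
    + rewrite T_add by (apply Hz || apply Hy). lra.
  - exact op_lp_sum_le.
Qed.

End WeaklyNull.

(* A norming sequence of the unit sphere has a subsequence converging in norm to a
   norm-attaining point: the weak limit [x] keeps all of [lp_sum q (T _)] because the
   remainders [y n] are weakly null, and then [q < p] forces [lp_sum p x = 1]. *)
Lemma norming_sequence_cv (xs : nat -> seqK K) : (forall n, in_lp K p (xs n)) ->
  (forall n, lp_sum K p (xs n) = 1) -> Un_cv (fun n => lp_sum K q (T (xs n))) 1 ->
  exists (phi : nat -> nat) x, in_lp K p x /\ lp_sum K p x = 1 /\ lp_sum K q (T x) = 1 /\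
    Un_cv (fun n => lp_sum K p (vsub K (xs (phi n)) x)) 0.
Proof.
  intros Hxs Hsum HTxs.
  destruct (lp_bounded_weak_cv_subseq p 1 xs Hp0 Hxs (fun n => Req_le _ _ (Hsum n)))
    as [phi [x [Hphi [Hx [HPx Hcv]]]]].
  set (y n := vsub K (xs (phi n)) x).
  set (C := rpow 2 p * 1 + rpow 2 p * 1).
  assert (Hy : forall n, in_lp K p (y n) /\ lp_sum K p (y n) <= C).
  { intros n. destruct (lp_sum_vsub_le p (xs (phi n)) x Hp0 (Hxs _) Hx) as [H1 H2].
    fold (y n) in H1, H2. split; [exact H1|]. rewrite Hsum in H2.
    pose proof (rpow_nonneg 2 p). unfold C. nra. }
  assert (Hdecomp : forall n, vadd K x (y n) = xs (phi n)).
  { intros n. apply functional_extensionality. intros k. apply sadd_sub_cancel. }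
  assert (Hp_add := lp_sum_add_cv p C x y Hp0 Hx (fun n => proj1 (Hy n)) (fun n => proj2 (Hy n)) Hcv).
  assert (HTy : forall n, in_lp K q (T (y n)) /\ lp_sum K q (T (y n)) <= rpow C (q / p)).
  { intros n. split; [apply T_maps, Hy|]. eapply Rle_trans; [apply op_lp_sum_le, Hy|].
    apply rpow_le; [apply Rdiv_lt_0_compat; lra | apply Hy]. }
  assert (Hq_add := lp_sum_add_cv q _ (T x) (fun n => T (y n)) Hq (T_maps x Hx)
    (fun n => proj1 (HTy n)) (fun n => proj2 (HTy n))
    (op_coord_cv_0 C y (fun n => proj1 (Hy n)) (fun n => proj2 (Hy n)) Hcv)).
  assert (HTy0 := op_lp_sum_cv_0 C y (fun n => proj1 (Hy n)) (fun n => proj2 (Hy n)) Hcv).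
  assert (HQx : lp_sum K q (T x) = 1).
  { apply UL_sequence with (fun n => lp_sum K q (T (xs (phi n)))
      - (lp_sum K q (T (xs (phi n))) - lp_sum K q (T x) - lp_sum K q (T (y n)))
      - lp_sum K q (T (y n))).
    - eapply Un_cv_ext; [|apply Un_cv_const]. intros n. simpl. ring.
    - assert (Hq_add' : Un_cv (fun n => lp_sum K q (T (xs (phi n))) - lp_sum K q (T x)
          - lp_sum K q (T (y n))) 0).
      { eapply Un_cv_ext; [|exact Hq_add]. intros n. simpl.
        rewrite <- T_add, Hdecomp by (apply Hx || apply Hy). reflexivity. }
      pose proof (CV_minus _ _ _ _ (CV_minus _ _ _ _ (Un_cv_subseq _ _ _ Hphi HTxs) Hq_add') HTy0) as L.
      rewrite !Rminus_0_r in L. exact L. }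
  assert (HPx1 : lp_sum K p x = 1).
  { destruct (Rle_lt_dec 1 (lp_sum K p x)) as [|Hlt]; [lra|].
    pose proof (op_lp_sum_le x Hx) as Hle. rewrite HQx in Hle.
    assert (rpow (lp_sum K p x) (q / p) < 1)
      by (apply rpow_lt_1; [apply Rdiv_lt_0_compat; lra | split; [apply lp_sum_nonneg | exact Hlt]]).
    lra. }
  exists phi, x. repeat split; auto.
  replace 0 with ((1 - 1) - 0) by ring.
  eapply Un_cv_ext; [|apply CV_minus; [apply Un_cv_const | exact Hp_add]].
  intros n. simpl. rewrite Hdecomp, Hsum, HPx1. unfold y. ring.
Qed.

Lemma strong_BPB_of_contraction eps : 0 < eps -> exists eta, 0 < eta /\
  forall x0, in_lp K p x0 -> lp_norm K p x0 = 1 -> lp_norm K q (T x0) > 1 - eta ->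
  exists x1, in_lp K p x1 /\ lp_norm K p x1 = 1 /\ lp_norm K q (T x1) = 1 /\
    lp_norm K p (vsub K x1 x0) < eps.
Proof.
  intros Heps. apply NNPP. intros Hno.
  assert (Hbad : forall n, exists x0, in_lp K p x0 /\ lp_sum K p x0 = 1 /\
    1 - / (INR n + 1) < lp_sum K q (T x0) /\ ~ exists x1, in_lp K p x1 /\ lp_norm K p x1 = 1 /\
      lp_norm K q (T x1) = 1 /\ lp_norm K p (vsub K x1 x0) < eps).
  { intros n. set (t := 1 - / (INR n + 1)).
    assert (Ht : 0 <= t < 1).
    { unfold t. pose proof (pos_INR n).
      assert (0 < / (INR n + 1) <= 1) by (split; [apply Rinv_0_lt_compat | rewrite <- Rinv_1; apply Rinv_le_contravar]; lra).
      lra. }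
    apply NNPP. intros Hn. apply Hno. exists (1 - rpow t (1 / q)). split.
    - assert (rpow t (1 / q) < 1) by (apply rpow_lt_1; [apply Rdiv_lt_0_compat|]; lra). lra.
    - intros x0 Hx0 Hn0 HT0. apply NNPP. intros Hgood. apply Hn. exists x0.
      repeat split; auto; [apply lp_norm_eq_1; auto | apply lp_sum_gt_of_lp_norm_gt; [exact Hq | lra]]. }
  destruct (choice _ Hbad) as [xs Hxs].
  destruct (norming_sequence_cv xs) as [phi [x [Hx [HPx [HQx Hcv]]]]]; try apply Hxs.
  - apply Un_cv_of_dist_lt_inv. intros n. destruct (Hxs n) as [H1 [H2 [H3 _]]].
    pose proof (op_lp_sum_le _ H1) as H4. rewrite H2, rpow_1_l in H4.
    rewrite Rabs_minus_sym, Rabs_right; lra.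
  - destruct (Hcv (rpow eps p)) as [N HN]; [apply rpow_gt0, Heps|].
    specialize (HN N (le_n N)). unfold R_dist in HN. rewrite Rminus_0_r, Rabs_right in HN
      by apply Rle_ge, lp_sum_nonneg.
    apply (proj2 (proj2 (proj2 (Hxs (phi N))))). exists x.
    repeat split; try apply lp_norm_eq_1; auto.
    apply lp_norm_lt_of_lp_sum_lt; [exact Hp0 | exact Heps|].
    rewrite (lp_sum_abs_eq p (vsub K (xs (phi N)) x)) by (intros k; apply sabs_sub_sym).
    exact HN.
Qed.

End SmallerTargetExponent.

Theorem sBPBp_of_exponent_lt {K : ScalarField} {SL : ScalarLaws K} p q :
  0 < q -> q < p -> 1 < p -> sBPBp K p q.
Proof.
  intros Hq Hqp Hp eps Heps T HT HT1.
  pose proof HT as [Hmaps [Hadd [Hscale _]]].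
  apply (strong_BPB_of_contraction p q T Hq Hqp Hp Hmaps Hadd Hscale); [|exact Heps].
  apply lp_norm_apply_le; [lra | exact Hq | exact HT | exact HT1].
Qed.

(** * The case p <= q *)

Section LargerTargetExponent.
Context {K : ScalarField} {SL : ScalarLaws K}.
Local Notation "| a |" := (sabs K a) (at level 30).
Variables p q : R.
Hypotheses (Hp : 0 < p) (Hpq : p <= q).

Let Hq : 0 < q. Proof. lra. Qed.

(* For [p < q]: [|x k|^q = |x k|^p * |x k|^(q-p) <= |x k|^p * (lp_sum p x)^((q-p)/p)]. *)
Lemma lp_sum_le_of_exponent_le x : in_lp K p x ->
  in_lp K q x /\ lp_sum K q x <= rpow (lp_sum K p x) (q / p).
Proof.
  intros Hx. set (S := lp_sum K p x). assert (HS : 0 <= S) by apply lp_sum_nonneg.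
  destruct (Req_dec p q) as [E | Hne].
  { rewrite <- E. replace (p / p) with 1 by (field; lra). rewrite rpow_1 by exact HS. split; [exact Hx | apply Rle_refl]. }
  destruct (infinite_sum_comparison (lp_term q x) (fun k => rpow S ((q - p) / p) * lp_term p x k)
    (rpow S ((q - p) / p) * S)) as [l [Hl Hle]].
  - intros k. split; [apply rpow_nonneg|]. unfold lp_term.
    replace q with (p + (q - p)) at 1 by ring.
    rewrite rpow_plus, (Rmult_comm (rpow S _)) by apply sabs_nonneg.
    apply Rmult_le_compat_l; [apply rpow_nonneg|].
    assert (Hk : |x k| <= rpow S (1 / p)).
    { apply rpow_le_rev with p; [exact Hp | apply rpow_nonneg|].
      rewrite rpow_mult by exact HS. replace (1 / p * p) with 1 by (field; lra).
      rewrite rpow_1 by exact HS. apply lp_sum_term_le, Hx. }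
    eapply Rle_trans; [apply rpow_le with (u := rpow S (1 / p)); [lra | exact Hk]|].
    rewrite rpow_mult by exact HS. right. f_equal. field. lra.
  - apply infinite_sum_scal, lp_sum_spec, Hx.
  - split; [exists l; exact Hl|]. rewrite (lp_sum_unique q x l Hl). eapply Rle_trans; [exact Hle|].
    right. rewrite <- (rpow_1 S) at 2 by exact HS. rewrite <- rpow_plus by exact HS.
    f_equal. field. lra.
Qed.

Lemma lp_norm_le_of_exponent_le x : in_lp K p x -> lp_norm K q x <= lp_norm K p x.
Proof.
  intros Hx. unfold lp_norm. eapply Rle_trans.
  - apply rpow_le; [apply Rdiv_lt_0_compat; lra | apply lp_sum_le_of_exponent_le, Hx].
  - rewrite rpow_mult by apply lp_sum_nonneg. right. f_equal. field. lra.
Qed.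

Definition diag_coef (k : nat) : R := 1 - / (INR k + 2).

Lemma diag_coef_bounds k : 0 < diag_coef k < 1.
Proof.
  unfold diag_coef. pose proof (pos_INR k).
  assert (/ (INR k + 2) < 1) by (rewrite <- Rinv_1; apply Rinv_lt_contravar; lra).
  assert (0 < / (INR k + 2)) by (apply Rinv_0_lt_compat; lra). lra.
Qed.

Lemma diag_coef_sup e : 0 < e -> exists m, 1 - e < diag_coef m.
Proof.
  intros He. destruct (INR_archimed 1 (/ e)) as [m Hm]; [lra|]. exists m. unfold diag_coef.
  assert (0 < / e) by (apply Rinv_0_lt_compat, He).
  enough (/ (INR m + 2) < e) by lra.
  rewrite <- (Rinv_inv e). apply Rinv_lt_contravar; [apply Rmult_lt_0_compat|]; lra.
Qed.

Definition diag_op (x : seqK K) : seqK K := fun k => smul K (ofR (diag_coef k)) (x k).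

Lemma diag_op_abs x k : |diag_op x k| = diag_coef k * |x k|.
Proof.
  unfold diag_op. rewrite sabs_mul, sabs_ofR, Rabs_right; [reflexivity|].
  pose proof (diag_coef_bounds k). lra.
Qed.

Lemma diag_op_lp_sum_le x : in_lp K p x -> in_lp K p (diag_op x) /\ lp_sum K p (diag_op x) <= lp_sum K p x.
Proof.
  intros Hx. apply lp_sum_dominated; [exact Hp | exact Hx|]. intros k. rewrite diag_op_abs.
  pose proof (diag_coef_bounds k). pose proof (sabs_nonneg (x k)). nra.
Qed.

Lemma diag_op_norm_le x : in_lp K p x -> lp_norm K q (diag_op x) <= lp_norm K p x.
Proof.
  intros Hx. destruct (diag_op_lp_sum_le x Hx) as [H1 H2].
  eapply Rle_trans; [apply lp_norm_le_of_exponent_le, H1|].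
  apply rpow_le; [apply Rdiv_lt_0_compat; lra | exact H2].
Qed.

Lemma diag_op_bounded_linear : bounded_linear K p q diag_op.
Proof.
  split; [|split; [|split]].
  - intros x Hx. apply lp_sum_le_of_exponent_le, diag_op_lp_sum_le, Hx.
  - intros x y _ _. apply functional_extensionality. intros k. apply smul_add_r.
  - intros a x _. apply functional_extensionality. intros k. apply smul_left_comm.
  - exists 1. intros x Hx. rewrite Rmult_1_l. apply diag_op_norm_le, Hx.
Qed.

Definition unit_vec (m : nat) : seqK K := fun j => if Nat.eqb j m then ofR 1 else ofR 0.

Lemma unit_vec_lp_sum s m : 0 < s -> in_lp K s (unit_vec m) /\ lp_sum K s (unit_vec m) = 1.
Proof.
  intros Hs. assert (H : infinite_sum (lp_term s (unit_vec m)) 1).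
  { apply infinite_sum_ext with (2 := infinite_sum_single m 1). intros j. unfold lp_term, unit_vec.
    destruct (Nat.eqb j m); rewrite sabs_ofR; [rewrite Rabs_R1, rpow_1_l | rewrite Rabs_R0, rpow_0_l]; reflexivity. }
  split; [exists 1; exact H | apply lp_sum_unique, H].
Qed.

Lemma diag_op_unit_vec m : lp_norm K q (diag_op (unit_vec m)) = diag_coef m.
Proof.
  pose proof (diag_coef_bounds m).
  assert (E : lp_norm K q (diag_op (unit_vec m)) = lp_norm K q (vscale K (ofR (diag_coef m)) (unit_vec m))).
  { unfold lp_norm. f_equal. apply lp_sum_abs_eq. intros j. unfold vscale. rewrite diag_op_abs, sabs_mul, sabs_ofR.
    unfold unit_vec. destruct (Nat.eqb_spec j m) as [-> | _].
    - rewrite Rabs_right; lra.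
    - rewrite sabs_ofR, Rabs_R0, !Rmult_0_r. reflexivity. }
  destruct (unit_vec_lp_sum q m Hq) as [H1 H2].
  rewrite E, lp_norm_scale, sabs_ofR, (proj2 (lp_norm_eq_1 q _ Hq) H2) by assumption.
  rewrite Rabs_right; lra.
Qed.

Lemma diag_op_norm_1 : op_norm_is K p q diag_op 1.
Proof.
  split.
  - intros t [x [Hx [Hn ->]]]. rewrite <- Hn. apply diag_op_norm_le, Hx.
  - intros b Hb. apply Rnot_lt_le. intros Hlt.
    destruct (diag_coef_sup (1 - b)) as [m Hm]; [lra|].
    enough (diag_coef m <= b) by lra. apply Hb. exists (unit_vec m).
    destruct (unit_vec_lp_sum p m Hp) as [H1 H2].
    split; [exact H1 | split; [apply lp_norm_eq_1; assumption | symmetry; apply diag_op_unit_vec]].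
Qed.

Lemma diag_op_not_norm_attaining x : in_lp K p x -> lp_sum K p x = 1 -> lp_norm K q (diag_op x) < 1.
Proof.
  intros Hx Hx1.
  assert (Hk : exists k, 0 < |x k|).
  { apply NNPP. intros Hno. assert (E : infinite_sum (lp_term p x) 0).
    { apply infinite_sum_ext with (2 := infinite_sum_finite (fun _ => 0) O (fun _ _ => eq_refl)).
      intros k. unfold lp_term. destruct (sabs_nonneg (x k)) as [Hpos | <-].
      - exfalso. apply Hno. exists k. exact Hpos.
      - rewrite rpow_0_l. reflexivity. }
    rewrite (lp_sum_unique p x 0 E) in Hx1. lra. }
  destruct Hk as [k Hk]. destruct (diag_op_lp_sum_le x Hx) as [HT1 HT2].
  assert (Hlt : lp_sum K p (diag_op x) < 1).
  { assert (0 < lp_sum K p x - lp_sum K p (diag_op x)); [|lra].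
    apply infinite_sum_pos with (3 := infinite_sum_minus _ _ _ _ (lp_sum_spec p x Hx) (lp_sum_spec p _ HT1)) (m := k).
    - intros j. unfold lp_term. rewrite diag_op_abs. pose proof (diag_coef_bounds j).
      assert (rpow (diag_coef j * |x j|) p <= rpow (|x j|) p)
        by (apply rpow_le; [exact Hp | pose proof (sabs_nonneg (x j)); nra]). lra.
    - unfold lp_term. rewrite diag_op_abs. pose proof (diag_coef_bounds k).
      assert (rpow (diag_coef k * |x k|) p < rpow (|x k|) p) by (apply rpow_lt; [exact Hp | nra]). lra. }
  eapply Rle_lt_trans; [apply lp_norm_le_of_exponent_le, HT1|].
  apply rpow_lt_1; [apply Rdiv_lt_0_compat; lra | split; [apply lp_sum_nonneg | exact Hlt]].
Qed.

End LargerTargetExponent.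

Theorem not_sBPBp_of_exponent_le {K : ScalarField} {SL : ScalarLaws K} p q :
  0 < p -> p <= q -> ~ sBPBp K p q.
Proof.
  intros Hp Hpq H.
  destruct (H 1 Rlt_0_1 (diag_op) (diag_op_bounded_linear p q Hp Hpq) (diag_op_norm_1 p q Hp Hpq))
    as [eta [Heta Hsbpb]].
  destruct (diag_coef_sup eta Heta) as [m Hm].
  destruct (unit_vec_lp_sum p m Hp) as [H1 H2].
  destruct (Hsbpb (unit_vec m) H1) as [x1 [Hx1 [Hn1 [HT1 _]]]].
  - apply lp_norm_eq_1; assumption.
  - rewrite (diag_op_unit_vec p q Hp Hpq). lra.
  - apply lp_norm_eq_1 in Hn1; [|exact Hp].
    pose proof (diag_op_not_norm_attaining p q Hp Hpq x1 Hx1 Hn1). lra.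
Qed.

(** * Real and complex scalars *)

Lemma cluster_point_subseq (u : nat -> R) l :
  (forall e, 0 < e -> forall N, exists n, (N <= n)%nat /\ Rabs (u n - l) < e) ->
  exists phi, strictly_increasing phi /\ Un_cv (fun n => u (phi n)) l.
Proof.
  intros H.
  destruct (choice (fun (Nk : nat * nat) n => (fst Nk <= n)%nat /\ Rabs (u n - l) < / (INR (snd Nk) + 1)))
    as [g Hg].
  { intros [N k]. simpl. apply H. apply Rinv_0_lt_compat. pose proof (pos_INR k). lra. }
  set (phi := fix phi n := match n with O => g (O, O) | S m => g (S (phi m), S m) end).
  exists phi. split.
  - intros n. simpl. destruct (Hg (S (phi n), S n)) as [Hge _]. simpl in Hge. lia.
  - apply Un_cv_of_dist_lt_inv. intros [|n]; apply (Hg (_, _)).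
Qed.

Lemma bounded_real_cv_subseq (a : nat -> R) B : (forall n, Rabs (a n) <= B) ->
  exists phi l, strictly_increasing phi /\ Un_cv (fun n => a (phi n)) l.
Proof.
  intros Hb. destruct (Bolzano_Weierstrass a (fun c => - B <= c <= B) (compact_P3 (- B) B)) as [l Hl].
  { intros n. apply Rabs_le_between, Hb. }
  destruct (cluster_point_subseq a l) as [phi Hphi].
  { intros e He N. destruct (Hl (disc l (mkposreal e He)) N) as [n [Hn Hd]]; [|exists n; auto].
    exists (mkposreal e He). intros y Hy. exact Hy. }
  exists phi, l. exact Hphi.
Qed.

#[export] Instance RScalars_laws : ScalarLaws RScalars.
Proof.
  refine {| ofR := (fun r => r) : R -> scal RScalars; Re := (fun r => r) : scal RScalars -> R |};
    simpl; intros; try ring.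
  - apply Rabs_pos.
  - apply Rabs_triang.
  - apply Rabs_mult.
  - apply Rabs_Ropp.
  - apply Rabs_minus_sym.
  - apply Rle_refl.
  - destruct (Rle_dec 0 w).
    + exists 1. rewrite Rabs_R1, Rabs_right by lra. split; ring.
    + exists (-1). rewrite Rabs_left, (Rabs_left w) by lra. split; ring.
  - destruct (bounded_real_cv_subseq a B H) as [phi [l [Hphi Hl]]].
    exists phi, l. split; [exact Hphi | apply Un_cv_dist_0, Hl].
Qed.

Lemma Cmod_sq z : Cmod z * Cmod z = fst z * fst z + snd z * snd z.
Proof. apply sqrt_sqrt. nra. Qed.

Lemma Cmod_nonneg z : 0 <= Cmod z.
Proof. apply sqrt_pos. Qed.

Lemma Cmod_add_le a b : Cmod (Cadd a b) <= Cmod a + Cmod b.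
Proof.
  pose proof (Cmod_nonneg a). pose proof (Cmod_nonneg b).
  apply Rsqr_incr_0_var; [|lra]. unfold Rsqr. rewrite Cmod_sq.
  pose proof (Cmod_sq a). pose proof (Cmod_sq b).
  destruct a as [a1 a2], b as [b1 b2]; unfold Cadd; simpl in *.
  assert (a1 * b1 + a2 * b2 <= Cmod (a1, a2) * Cmod (b1, b2)).
  { destruct (Rle_dec (a1 * b1 + a2 * b2) 0); [nra|].
    apply Rsqr_incr_0_var; [unfold Rsqr | nra].
    replace (Cmod (a1, a2) * Cmod (b1, b2) * (Cmod (a1, a2) * Cmod (b1, b2)))
      with (Cmod (a1, a2) * Cmod (a1, a2) * (Cmod (b1, b2) * Cmod (b1, b2))) by ring.
    pose proof (Rle_0_sqr (a1 * b2 - a2 * b1)). unfold Rsqr in *. nra. }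
  nra.
Qed.

Lemma Cmod_mul a b : Cmod (Cmul a b) = Cmod a * Cmod b.
Proof.
  destruct a as [a1 a2], b as [b1 b2]. unfold Cmod, Cmul; simpl.
  rewrite <- sqrt_mult by nra. f_equal. ring.
Qed.

Lemma Cmod_real r : Cmod (r, 0) = Rabs r.
Proof. unfold Cmod; simpl. rewrite <- sqrt_Rsqr_abs. f_equal. unfold Rsqr. ring. Qed.

Lemma Cmod_fst_le z : Rabs (fst z) <= Cmod z.
Proof.
  destruct z as [a b]. unfold Cmod; simpl. rewrite <- sqrt_Rsqr_abs.
  apply sqrt_le_1_alt. unfold Rsqr. nra.
Qed.

Lemma Cmod_snd_le z : Rabs (snd z) <= Cmod z.
Proof.
  destruct z as [a b]. unfold Cmod; simpl. rewrite <- sqrt_Rsqr_abs.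
  apply sqrt_le_1_alt. unfold Rsqr. nra.
Qed.

Lemma Cmod_le_abs_sum z : Cmod z <= Rabs (fst z) + Rabs (snd z).
Proof.
  destruct z as [a b]. unfold Cmod; simpl. rewrite <- (sqrt_Rsqr (Rabs a + Rabs b))
    by (pose proof (Rabs_pos a); pose proof (Rabs_pos b); lra).
  apply sqrt_le_1_alt. pose proof (Rabs_pos a). pose proof (Rabs_pos b).
  rewrite !Rsqr_plus, <- !Rsqr_abs. unfold Rsqr. nra.
Qed.

(* The rotation [conj w / |w|] turns [w] onto the positive real axis. *)
Lemma Cmod_rotation (w : R * R) : exists c, Cmod c = 1 /\ fst (Cmul c w) = Cmod w.
Proof.
  destruct w as [a b]. pose proof (Cmod_sq (a, b)) as Hsq. simpl in Hsq.
  destruct (Req_dec (Cmod (a, b)) 0) as [E | E].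
  - exists (1, 0). rewrite Cmod_real, Rabs_R1, E. split; [reflexivity|].
    rewrite E in Hsq. unfold Cmul; simpl. nra.
  - pose proof (Cmod_nonneg (a, b)). set (m := Cmod (a, b)) in *. assert (Hm : 0 < m) by lra.
    exists (a / m, - b / m). unfold Cmod at 1, Cmul; simpl. split.
    + replace (a / m * (a / m) + - b / m * (- b / m)) with ((a * a + b * b) / (m * m)) by (field; lra).
      rewrite <- Hsq. unfold Rdiv. rewrite Rinv_r by nra. apply sqrt_1.
    + replace (a / m * a - - b / m * b) with ((a * a + b * b) / m) by (field; lra).
      rewrite <- Hsq. field. lra.
Qed.

#[export] Instance CScalars_laws : ScalarLaws CScalars.
Proof.
  refine {| ofR := (fun r => (r, 0)) : R -> scal CScalars; Re := fst : scal CScalars -> R |};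
    simpl; try (intros [? ?] [? ?]; unfold Cadd, Copp; simpl; f_equal; ring).
  - apply Cmod_nonneg.
  - apply Cmod_add_le.
  - apply Cmod_mul.
  - intros [a1 a2]. unfold Cmod, Copp; simpl. f_equal. ring.
  - intros [a1 a2] [b1 b2]. unfold Cmod, Cadd, Copp; simpl. f_equal. ring.
  - intros [c1 c2] [a1 a2] [b1 b2]. unfold Cmul, Cadd; simpl. f_equal; ring.
  - intros [c1 c2] [a1 a2] [b1 b2]. unfold Cmul; simpl. f_equal; ring.
  - apply Cmod_real.
  - apply Cmod_fst_le.
  - apply Cmod_rotation.
  - intros a B Hb.
    destruct (bounded_real_cv_subseq (fun n => fst (a n)) B) as [phi1 [l1 [H1 Hl1]]].
    { intros n. eapply Rle_trans; [apply Cmod_fst_le | apply Hb]. }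
    destruct (bounded_real_cv_subseq (fun n => snd (a (phi1 n))) B) as [phi2 [l2 [H2 Hl2]]].
    { intros n. eapply Rle_trans; [apply Cmod_snd_le | apply Hb]. }
    exists (fun n => phi1 (phi2 n)), (l1, l2). split; [apply strictly_increasing_comp; assumption|].
    apply Un_cv_dist_le with (fun n => Rabs (fst (a (phi1 (phi2 n))) - l1) + Rabs (snd (a (phi1 (phi2 n))) - l2)).
    + intros n. rewrite Rminus_0_r, Rabs_right by apply Rle_ge, Cmod_nonneg. apply Cmod_le_abs_sum.
    + rewrite <- (Rplus_0_r 0). apply CV_plus; apply Un_cv_dist_0; [|exact Hl2].
      apply (Un_cv_subseq (fun n => fst (a (phi1 n)))); assumption.
Qed.

Theorem mainTheorem20 (c : scalar_choice) :
  (forall p q : R, 1 <= q -> q < p -> sBPBp (Kof c) p q) /\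
  (forall p q : R, 1 < p -> p <= q -> ~ sBPBp (Kof c) p q).
Proof.
  assert (SL : ScalarLaws (Kof c)) by (destruct c; [exact RScalars_laws | exact CScalars_laws]).
  split.
  - intros p q Hq Hqp. apply sBPBp_of_exponent_lt; lra.
  - intros p q Hp Hpq. apply not_sBPBp_of_exponent_le; lra.
Qed.
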